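(* Let $\langle X,d\rangle$ be a metric space with completion $\langle\widehat{X},\widehat{d}\rangle$. The following are equivalent: (1) $\widehat{X}$ is cofinally Bourbaki quasi-complete; (2) every Cauchy-continuous function $f$ from $X$ to any metric space $\langle Y,\rho\rangle$ maps every cofinally Bourbaki quasi-Cauchy sequence in $X$ to a sequence in $Y$ that has a Cauchy subsequence; (3) every Cauchy-continuous function from $X$ to any metric space $\langle Y,\rho\rangle$ maps every cofinally Bourbaki quasi-Cauchy sequence in $X$ to a cofinally Cauchy sequence in $Y$; (4) every Cauchy-continuous function from $X$ to any metric space $\langle Y,\rho\rangle$ maps every cofinally Bourbaki quasi-Cauchy sequence in $X$ to a cofinally Bourbaki-Cauchy sequence in $Y$; (5) every real-valued Cauchy-continuous function on $X$ maps every cofinally Bourbaki quasi-Cauchy sequence in $X$ to a cofinally Bourbaki-Cauchy sequence in $\mathbb{R}$; (6) every cofinally Bourbaki quasi-Cauchy sequence in $X$ has a Cauchy subsequence.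
   Context: A function is Cauchy-continuous if it maps Cauchy sequences to Cauchy sequences. For $\varepsilon>0$, an $\varepsilon$-chain joining $x,y$ is a finite sequence $x=x_0,\dots,x_n=y$ with consecutive distances $<\varepsilon$. A sequence $\langle x_n\rangle$ in a metric space is cofinally Bourbaki quasi-Cauchy if for every $\varepsilon>0$ there is an infinite $N_\varepsilon\subseteq\mathbb{N}$ such that any $x_j,x_k$ with $j,k\in N_\varepsilon$ can be joined by an $\varepsilon$-chain (in that space); a metric space is cofinally Bourbaki quasi-complete if every such sequence has a cluster point. A sequence $\langle y_n\rangle$ in $\langle Y,\rho\rangle$ is cofinally Cauchy if for every $\varepsilon>0$ there is an infinite $N_\varepsilon\subseteq\mathbb{N}$ with $\rho(y_n,y_m)<\varepsilon$ for $n,m\in N_\varepsilon$. With $S^1_\rho(p,\varepsilon)$ the open $\varepsilon$-ball about $p$ and $S^{m}_\rho(p,\varepsilon)=\{y:\rho(y,S^{m-1}_\rho(p,\varepsilon))<\varepsilon\}$, $\langle y_n\rangle$ is cofinally Bourbaki-Cauchy if for every $\varepsilon>0$ there exist an infinite $N_\varepsilon\subseteq\mathbb{N}$, $m\in\mathbb{N}$, $p\in Y$ with $y_n\in S^m_\rho(p,\varepsilon)$ for all $n\in N_\varepsilon$. *)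

From Stdlib Require Import Reals Lra.
Open Scope R_scope.

Definition is_metric {T : Type} (d : T -> T -> R) : Prop :=
  (forall x y, 0 <= d x y) /\
  (forall x y, d x y = 0 <-> x = y) /\
  (forall x y, d x y = d y x) /\
  (forall x y z, d x z <= d x y + d y z).

Definition cauchy_seq {T : Type} (d : T -> T -> R) (x : nat -> T) : Prop :=
  forall eps, 0 < eps -> exists N, forall n m, (N <= n)%nat -> (N <= m)%nat ->
    d (x n) (x m) < eps.

Definition converges {T : Type} (d : T -> T -> R) (x : nat -> T) : Prop :=
  exists p, forall eps, 0 < eps -> exists N, forall n, (N <= n)%nat -> d (x n) p < eps.

Definition complete_metric {T : Type} (d : T -> T -> R) : Prop :=
  forall x : nat -> T, cauchy_seq d x -> converges d x.

Definition cauchy_continuous {X Y : Type} (d : X -> X -> R) (rho : Y -> Y -> R)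
  (f : X -> Y) : Prop :=
  forall x : nat -> X, cauchy_seq d x -> cauchy_seq rho (fun n => f (x n)).

Definition infinite_nat (N : nat -> Prop) : Prop :=
  forall k, exists n, (k <= n)%nat /\ N n.

Definition eps_chain {T : Type} (d : T -> T -> R) (eps : R) (x y : T) : Prop :=
  exists (n : nat) (s : nat -> T), s 0%nat = x /\ s n = y /\
    forall i, (i < n)%nat -> d (s i) (s (S i)) < eps.

Definition cofinally_bourbaki_quasi_cauchy {T : Type} (d : T -> T -> R)
  (x : nat -> T) : Prop :=
  forall eps, 0 < eps -> exists N, infinite_nat N /\
    forall j k, N j -> N k -> eps_chain d eps (x j) (x k).

Definition cluster_point {T : Type} (d : T -> T -> R) (x : nat -> T) (p : T) : Prop :=
  forall eps, 0 < eps -> forall k, exists n, (k <= n)%nat /\ d (x n) p < eps.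

Definition cofinally_bourbaki_quasi_complete {T : Type} (d : T -> T -> R) : Prop :=
  forall x : nat -> T, cofinally_bourbaki_quasi_cauchy d x -> exists p, cluster_point d x p.

Definition cofinally_cauchy {T : Type} (d : T -> T -> R) (y : nat -> T) : Prop :=
  forall eps, 0 < eps -> exists N, infinite_nat N /\
    forall n m, N n -> N m -> d (y n) (y m) < eps.

(** S_aux d p eps k is S^{k+1}_d(p, eps): S^1 is the open ball about p and
    S^{m} = {y : d(y, S^{m-1}) < eps} = {y : exists z in S^{m-1}, d y z < eps}. *)
Fixpoint S_aux {T : Type} (d : T -> T -> R) (p : T) (eps : R) (k : nat) : T -> Prop :=
  match k with
  | O => fun y => d p y < eps
  | S k' => fun y => exists z, S_aux d p eps k' z /\ d y z < eps
  end.

Definition S_ball {T : Type} (d : T -> T -> R) (p : T) (m : nat) (eps : R) : T -> Prop :=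
  S_aux d p eps (m - 1).

Definition cofinally_bourbaki_cauchy {T : Type} (d : T -> T -> R) (y : nat -> T) : Prop :=
  forall eps, 0 < eps -> exists N, infinite_nat N /\ exists (m : nat) (p : T),
    (1 <= m)%nat /\ forall n, N n -> S_ball d p m eps (y n).

Definition has_cauchy_subseq {T : Type} (d : T -> T -> R) (y : nat -> T) : Prop :=
  exists phi : nat -> nat, (forall n, (phi n < phi (S n))%nat) /\
    cauchy_seq d (fun n => y (phi n)).

Definition is_completion {X Xh : Type} (d : X -> X -> R) (dh : Xh -> Xh -> R)
  (i : X -> Xh) : Prop :=
  is_metric dh /\ complete_metric dh /\
  (forall x y, dh (i x) (i y) = d x y) /\
  (forall z eps, 0 < eps -> exists x, dh z (i x) < eps).

From Stdlib Require Import Reals Lra Lia Classical ClassicalEpsilon.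
Open Scope R_scope.

(* (1) <-> (6): an isometry preserves cofinally Bourbaki quasi-Cauchy sequences, so a
   cluster point in the completion yields a Cauchy subsequence in X; conversely a
   cofinally Bourbaki quasi-Cauchy sequence of the completion is shadowed, at distance
   1/(n+1), by one in X, and the limit of a Cauchy subsequence of the shadow is a
   cluster point of the original sequence.
   (6) -> (2) -> (3) -> (4) -> (5) are immediate.
   (5) -> (6): if x has no Cauchy subsequence, every Cauchy sequence eventually keeps a
   fixed distance from the tail of x.  Hence the sum of the tents of height n+1 and
   radius 1/(n+1) centred at the x n is, along any Cauchy sequence, eventually a finite
   sum of Lipschitz functions, so it is Cauchy-continuous; it is unbounded along x,
   whereas a cofinally Bourbaki-Cauchy real sequence is bounded on an infinite set. *)

Lemma inv_INR_succ_pos (n : nat) : 0 < / (INR n + 1).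
Proof. apply Rinv_0_lt_compat. pose proof (pos_INR n). lra. Qed.

Lemma inv_INR_succ_eventually_lt (eps : R) :
  0 < eps -> exists J, forall n, (J <= n)%nat -> / (INR n + 1) < eps.
Proof.
  intros Heps. destruct (INR_unbounded (/ eps)) as [J HJ]. exists J. intros n Hn.
  apply le_INR in Hn. pose proof (Rinv_0_lt_compat eps Heps).
  rewrite <- (Rinv_inv eps). apply Rinv_lt_contravar; [apply Rmult_lt_0_compat|]; lra.
Qed.

Lemma infinite_nat_tail (N : nat -> Prop) (J : nat) :
  infinite_nat N -> infinite_nat (fun n => N n /\ (J <= n)%nat).
Proof.
  intros HN k. destruct (HN (max k J)) as [n [Hn HNn]].
  exists n. repeat split; auto; lia.
Qed.

Lemma strictly_increasing_ge (phi : nat -> nat) :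
  (forall j, (phi j < phi (S j))%nat) -> forall j, (j <= phi j)%nat.
Proof. intros Hphi j. induction j as [|j IH]; [lia|]. specialize (Hphi j). lia. Qed.

Lemma increasing_selection (P : nat -> nat -> Prop) :
  (forall j K, exists n, (K <= n)%nat /\ P j n) ->
  exists phi : nat -> nat, (forall j, (phi j < phi (S j))%nat) /\ forall j, P j (phi j).
Proof.
  intros HP. destruct (choice (fun jK n => (snd jK <= n)%nat /\ P (fst jK) n))
    as [g Hg]; [intros [j K]; apply HP|].
  set (phi := nat_rect _ (g (0, 0)%nat) (fun j phij => g (S j, S phij))).
  exists phi. split.
  - intros j. exact (proj1 (Hg (S j, S (phi j)))).
  - intros [|j]; apply (Hg (_, _)).
Qed.

Lemma eps_chain_cons {T : Type} (d : T -> T -> R) (eps : R) (x y z : T) :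
  d x y < eps -> eps_chain d eps y z -> eps_chain d eps x z.
Proof.
  intros Hxy [n [s [Hs0 [Hsn Hs]]]].
  exists (S n), (fun m => match m with O => x | S m' => s m' end).
  repeat split; auto.
  intros [|m] Hm; [rewrite Hs0; exact Hxy | apply Hs; lia].
Qed.

Lemma cluster_point_fast_subseq {T : Type} (d : T -> T -> R) (x : nat -> T) (p : T) :
  cluster_point d x p ->
  exists phi : nat -> nat, (forall j, (phi j < phi (S j))%nat) /\
    forall j, d (x (phi j)) p < / (INR j + 1).
Proof.
  intros Hp. apply (increasing_selection (fun j n => d (x n) p < / (INR j + 1))).
  intros j K. exact (Hp _ (inv_INR_succ_pos j) K).
Qed.

Lemma Rmax_0_lipschitz (s t : R) : Rabs (Rmax 0 s - Rmax 0 t) <= Rabs (s - t).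
Proof.
  pose proof (Rle_abs (s - t)). pose proof (Rle_abs (t - s)) as Hts.
  rewrite Rabs_minus_sym in Hts.
  apply Rabs_le. unfold Rmax. destruct (Rle_dec 0 s), (Rle_dec 0 t); lra.
Qed.

Section Metric.

Variables (T : Type) (d : T -> T -> R).
Hypothesis Hd : is_metric d.

Lemma metric_self (a : T) : d a a = 0.
Proof. apply Hd. reflexivity. Qed.

Lemma metric_sym (a b : T) : d a b = d b a.
Proof. apply Hd. Qed.

Lemma metric_triangle (a b c : T) : d a c <= d a b + d b c.
Proof. apply Hd. Qed.

Lemma metric_triangle3 (a b c e : T) : d a e <= d a b + d b c + d c e.
Proof. pose proof (metric_triangle a b e). pose proof (metric_triangle b c e). lra. Qed.

Lemma metric_diff_le (a b p : T) : Rabs (d a p - d b p) <= d a b.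
Proof.
  pose proof (metric_triangle a b p). pose proof (metric_triangle b a p).
  rewrite (metric_sym b a) in *. apply Rabs_le. lra.
Qed.

Lemma cauchy_seq_const (y : T) : cauchy_seq d (fun _ => y).
Proof. intros eps Heps. exists 0%nat. intros. rewrite metric_self. exact Heps. Qed.

Lemma fast_convergence_cauchy (y : nat -> T) (p : T) :
  (forall j, d (y j) p < / (INR j + 1)) -> cauchy_seq d y.
Proof.
  intros Hy eps Heps. destruct (inv_INR_succ_eventually_lt (eps / 2)) as [J HJ]; [lra|].
  exists J. intros n m Hn Hm.
  pose proof (HJ n Hn). pose proof (HJ m Hm). pose proof (Hy n). pose proof (Hy m).
  pose proof (metric_triangle (y n) p (y m)). rewrite (metric_sym p) in *. lra.
Qed.

Lemma S_aux_dist_lt (p : T) (eps : R) (k : nat) (y : T) :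
  S_aux d p eps k y -> d p y < INR (S k) * eps.
Proof.
  revert y. induction k as [|k IH]; intros y Hy; simpl in Hy.
  - simpl. lra.
  - destruct Hy as [z [Hz Hyz]]. specialize (IH z Hz).
    pose proof (metric_triangle p z y). rewrite (metric_sym z y) in *.
    rewrite S_INR. lra.
Qed.

Lemma cofinally_bourbaki_cauchy_bounded (y : nat -> T) :
  cofinally_bourbaki_cauchy d y ->
  exists p B N, infinite_nat N /\ forall n, N n -> d p (y n) < B.
Proof.
  intros Hy. destruct (Hy 1 Rlt_0_1) as [N [HN [m [p [_ Hball]]]]].
  exists p, (INR (S (m - 1)) * 1), N. split; [exact HN|].
  intros n HNn. exact (S_aux_dist_lt _ _ _ _ (Hball n HNn)).
Qed.

Lemma eps_chain_sym (eps : R) (a b : T) : eps_chain d eps a b -> eps_chain d eps b a.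
Proof.
  intros [n [s [Hs0 [Hsn Hs]]]].
  exists n, (fun m => s (n - m)%nat). repeat split.
  - rewrite Nat.sub_0_r. exact Hsn.
  - rewrite Nat.sub_diag. exact Hs0.
  - intros m Hm. rewrite metric_sym. replace (n - m)%nat with (S (n - S m)) by lia.
    apply Hs. lia.
Qed.

Lemma eps_chain_rcons (eps : R) (x y z : T) :
  eps_chain d eps x y -> d y z < eps -> eps_chain d eps x z.
Proof.
  intros Hxy Hyz. apply eps_chain_sym, eps_chain_cons with y; [now rewrite metric_sym|].
  now apply eps_chain_sym.
Qed.

Lemma no_cauchy_subseq_separated (x : nat -> T) :
  ~ has_cauchy_subseq d x -> forall u, cauchy_seq d u ->
  exists eps, 0 < eps /\ exists K k0, forall n k, (K <= n)%nat -> (k0 <= k)%nat ->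
    eps <= d (u k) (x n).
Proof.
  intros Hno u Hu. apply NNPP. intros Hnear. apply Hno.
  (* Otherwise terms of x come arbitrarily close to arbitrarily late terms of u. *)
  destruct (increasing_selection
    (fun j n => exists k, (j <= k)%nat /\ d (u k) (x n) < / (INR j + 1)))
    as [phi [Hphi Hclose]].
  { intros j K. apply NNPP. intros Hfar. apply Hnear.
    exists (/ (INR j + 1)). split; [apply inv_INR_succ_pos|].
    exists K, j. intros n k Hn Hk. apply Rnot_lt_le. intros Hlt. apply Hfar. eauto. }
  exists phi. split; [exact Hphi|].
  intros eps Heps. destruct (Hu (eps / 3)) as [M HM]; [lra|].
  destruct (inv_INR_succ_eventually_lt (eps / 3)) as [J HJ]; [lra|].
  exists (max M J). intros a b Ha Hb.
  destruct (Hclose a) as [ka [Hka Hda]], (Hclose b) as [kb [Hkb Hdb]].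
  pose proof (HJ a ltac:(lia)). pose proof (HJ b ltac:(lia)).
  pose proof (HM ka kb ltac:(lia) ltac:(lia)).
  pose proof (metric_triangle (x (phi a)) (u ka) (x (phi b))) as Htri.
  pose proof (metric_triangle (u ka) (u kb) (x (phi b))).
  rewrite (metric_sym (x (phi a)) (u ka)) in Htri. lra.
Qed.

Lemma cluster_point_near_subseq_limit (z w : nat -> T) (phi : nat -> nat) (p : T) :
  (forall n, d (z n) (w n) < / (INR n + 1)) -> (forall j, (phi j < phi (S j))%nat) ->
  (forall eps, 0 < eps -> exists N, forall j, (N <= j)%nat -> d (w (phi j)) p < eps) ->
  cluster_point d z p.
Proof.
  intros Hzw Hphi Hlim eps Heps k.
  destruct (Hlim (eps / 2)) as [N HN]; [lra|].
  destruct (inv_INR_succ_eventually_lt (eps / 2)) as [J HJ]; [lra|].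
  set (j := max k (max N J)). pose proof (strictly_increasing_ge phi Hphi j).
  exists (phi j). split; [lia|].
  pose proof (HN j ltac:(lia)). pose proof (Hzw (phi j)). pose proof (HJ (phi j) ltac:(lia)).
  pose proof (metric_triangle (z (phi j)) (w (phi j)) p). lra.
Qed.

Definition tent (p : T) (h : R) (y : T) : R := Rmax 0 (h - h * h * d y p).

Lemma tent_ge0 (p : T) (h : R) (y : T) : 0 <= tent p h y.
Proof. apply Rmax_l. Qed.

Lemma tent_center (p : T) (h : R) : 0 <= h -> tent p h p = h.
Proof.
  intros Hh. unfold tent. rewrite metric_self, Rmult_0_r, Rminus_0_r. now apply Rmax_right.
Qed.

Lemma tent_vanishes (p : T) (h : R) (y : T) : 0 < h -> / h <= d y p -> tent p h y = 0.
Proof.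
  intros Hh Hy. apply Rmax_left.
  assert (1 <= h * d y p).
  { rewrite <- (Rinv_r h) by lra. apply Rmult_le_compat_l; lra. }
  nra.
Qed.

Lemma tent_lipschitz (p : T) (h : R) (a b : T) :
  Rabs (tent p h a - tent p h b) <= h * h * d a b.
Proof.
  eapply Rle_trans; [apply Rmax_0_lipschitz|].
  replace (h - h * h * d a p - (h - h * h * d b p)) with (h * h * (d b p - d a p)) by ring.
  rewrite Rabs_mult, Rabs_right by nra.
  apply Rmult_le_compat_l; [nra|]. rewrite (metric_sym a b). apply metric_diff_le.
Qed.

End Metric.

Lemma Rdist_metric : is_metric Rdist.
Proof.
  repeat split.
  - intros a b. pose proof (Rdist_pos a b). lra.
  - apply Rdist_refl.
  - apply Rdist_refl.
  - apply Rdist_sym.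
  - intros a b c. apply Rdist_tri.
Qed.

Lemma real_unbounded_not_cofinally_bourbaki_cauchy (y : nat -> R) :
  (forall n, INR n + 1 <= y n) -> ~ cofinally_bourbaki_cauchy Rdist y.
Proof.
  intros Hy Hcb.
  destruct (cofinally_bourbaki_cauchy_bounded R Rdist Rdist_metric y Hcb) as [p [B [N [HN HB]]]].
  destruct (INR_unbounded (p + B)) as [k Hk]. destruct (HN k) as [n [Hn HNn]].
  specialize (HB n HNn). specialize (Hy n). apply le_INR in Hn.
  unfold Rdist in HB. rewrite Rabs_minus_sym in HB. pose proof (Rle_abs (y n - p)). lra.
Qed.

Lemma sum_f_R0_eventually_zero (g : nat -> R) (K : nat) :
  (forall n, (K <= n)%nat -> g n = 0) -> forall M, (K <= M)%nat -> sum_f_R0 g M = sum_f_R0 g K.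
Proof.
  intros Hg M. induction M as [|M IH]; intros HM.
  - now replace K with 0%nat by lia.
  - destruct (Nat.eq_dec K (S M)) as [->|HK]; [reflexivity|].
    simpl. rewrite (Hg (S M)), IH by lia. ring.
Qed.

Lemma sum_f_R0_term_le (g : nat -> R) :
  (forall n, 0 <= g n) -> forall m M, (m <= M)%nat -> g m <= sum_f_R0 g M.
Proof.
  intros Hg m M. induction M as [|M IH]; intros HM.
  - now replace m with 0%nat by lia.
  - simpl. pose proof (Hg (S M)). destruct (Nat.eq_dec m (S M)) as [->|Hm].
    + pose proof (cond_pos_sum g M Hg). lra.
    + specialize (IH ltac:(lia)). lra.
Qed.

Lemma cauchy_seq_dominated {T Y : Type} (d : T -> T -> R) (rho : Y -> Y -> R)
  (u : nat -> T) (y : nat -> Y) (C : R) (k0 : nat) :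
  0 <= C ->
  (forall n m, (k0 <= n)%nat -> (k0 <= m)%nat -> rho (y n) (y m) <= C * d (u n) (u m)) ->
  cauchy_seq d u -> cauchy_seq rho y.
Proof.
  intros HC Hdom Hu eps Heps.
  assert (Heps' : 0 < eps / (C + 1)) by (apply Rdiv_lt_0_compat; lra).
  destruct (Hu _ Heps') as [M HM]. exists (max M k0). intros n m Hn Hm.
  specialize (HM n m ltac:(lia) ltac:(lia)). specialize (Hdom n m ltac:(lia) ltac:(lia)).
  assert (C * d (u n) (u m) <= C * (eps / (C + 1))) by (apply Rmult_le_compat_l; lra).
  replace (C * (eps / (C + 1))) with (eps - eps / (C + 1)) in * by (field; lra).
  lra.
Qed.

Section LocallyFiniteSum.

Variables (T : Type) (d : T -> T -> R) (g : nat -> T -> R) (c : nat -> R).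
Hypothesis Hd : is_metric d.
Hypothesis c_ge0 : forall n, 0 <= c n.
Hypothesis g_lipschitz : forall n a b, Rabs (g n a - g n b) <= c n * d a b.
Hypothesis g_locally_finite : forall u, cauchy_seq d u ->
  exists L k0, forall n k, (L <= n)%nat -> (k0 <= k)%nat -> g n (u k) = 0.

Lemma locally_finite_sum_cauchy_continuous :
  exists F : T -> R, cauchy_continuous d Rdist F /\
    forall y L, (forall n, (L <= n)%nat -> g n y = 0) -> F y = sum_f_R0 (fun n => g n y) L.
Proof.
  destruct (choice (fun y L => forall n, (L <= n)%nat -> g n y = 0)) as [K HK].
  { intros y. destruct (g_locally_finite _ (cauchy_seq_const T d Hd y)) as [L [k0 HL]].
    exists L. intros n Hn. exact (HL n k0 Hn (le_n k0)). }
  set (F := fun y => sum_f_R0 (fun n => g n y) (K y)).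
  assert (HF : forall y L, (forall n, (L <= n)%nat -> g n y = 0) ->
                 F y = sum_f_R0 (fun n => g n y) L).
  { intros y L HL. unfold F.
    rewrite <- (sum_f_R0_eventually_zero _ _ (HK y) (max (K y) L)) by lia.
    apply sum_f_R0_eventually_zero; [exact HL | lia]. }
  exists F. split; [|exact HF].
  intros u Hu. destruct (g_locally_finite u Hu) as [L [k0 HL]].
  apply (cauchy_seq_dominated d Rdist u _ (sum_f_R0 c L) k0); [|intros n m Hn Hm|exact Hu].
  - now apply cond_pos_sum.
  - unfold Rdist. rewrite (HF (u n) L), (HF (u m) L) by (intros; apply HL; lia).
    rewrite <- minus_sum, Rmult_comm, scal_sum.
    eapply Rle_trans; [apply Rabs_triang_gen|].
    apply sum_Rle. intros k _. apply g_lipschitz.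
Qed.

End LocallyFiniteSum.

Lemma no_cauchy_subseq_unbounded_function {T : Type} (d : T -> T -> R) (Hd : is_metric d)
  (x : nat -> T) :
  ~ has_cauchy_subseq d x ->
  exists f : T -> R, cauchy_continuous d Rdist f /\ forall n, INR n + 1 <= f (x n).
Proof.
  intros Hno. set (g := fun n => tent T d (x n) (INR n + 1)).
  assert (Hfin : forall u, cauchy_seq d u ->
            exists L k0, forall n k, (L <= n)%nat -> (k0 <= k)%nat -> g n (u k) = 0).
  { intros u Hu.
    destruct (no_cauchy_subseq_separated T d Hd x Hno u Hu) as [eps [Heps [K [k0 Hsep]]]].
    destruct (inv_INR_succ_eventually_lt eps Heps) as [J HJ].
    exists (max K J), k0. intros n k Hn Hk. pose proof (pos_INR n).
    apply tent_vanishes; [lra |].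
    specialize (Hsep n k ltac:(lia) Hk). specialize (HJ n ltac:(lia)). lra. }
  destruct (locally_finite_sum_cauchy_continuous T d g (fun n => (INR n + 1) * (INR n + 1))
              Hd) as [F [HF HFsum]].
  - intros n. pose proof (pos_INR n). nra.
  - intros n a b. apply tent_lipschitz, Hd.
  - exact Hfin.
  - exists F. split; [exact HF|]. intros n.
    destruct (Hfin _ (cauchy_seq_const T d Hd (x n))) as [L [k0 HL]].
    rewrite (HFsum (x n) (max L n)) by (intros k Hk; exact (HL k k0 ltac:(lia) (le_n k0))).
    pose proof (pos_INR n).
    replace (INR n + 1) with (g n (x n)) by (apply tent_center; [exact Hd | lra]).
    apply (sum_f_R0_term_le (fun k => g k (x n))); [intros; apply tent_ge0 | lia].
Qed.

Lemma has_cauchy_subseq_comp {X Y : Type} (d : X -> X -> R) (rho : Y -> Y -> R)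
  (f : X -> Y) (x : nat -> X) :
  cauchy_continuous d rho f -> has_cauchy_subseq d x -> has_cauchy_subseq rho (fun n => f (x n)).
Proof. intros Hf [phi [Hphi Hcs]]. exists phi. split; [exact Hphi | exact (Hf _ Hcs)]. Qed.

Lemma has_cauchy_subseq_cofinally_cauchy {T : Type} (d : T -> T -> R) (y : nat -> T) :
  has_cauchy_subseq d y -> cofinally_cauchy d y.
Proof.
  intros [phi [Hphi Hcs]] eps Heps. destruct (Hcs eps Heps) as [K HK].
  exists (fun n => exists j, (K <= j)%nat /\ phi j = n). split.
  - intros k. pose proof (strictly_increasing_ge phi Hphi (max k K)).
    exists (phi (max k K)). split; [lia|]. exists (max k K). split; [lia | reflexivity].
  - intros n m [j [Hj <-]] [j' [Hj' <-]]. exact (HK j j' Hj Hj').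
Qed.

Lemma cofinally_cauchy_bourbaki {T : Type} (d : T -> T -> R) (y : nat -> T) :
  cofinally_cauchy d y -> cofinally_bourbaki_cauchy d y.
Proof.
  intros Hy eps Heps. destruct (Hy eps Heps) as [N [HN Hclose]].
  destruct (HN 0%nat) as [n0 [_ HNn0]].
  exists N. split; [exact HN|]. exists 1%nat, (y n0). split; [lia|].
  intros n HNn. exact (Hclose n0 n HNn0 HNn).
Qed.

Section Completion.

Variables (X Xh : Type) (d : X -> X -> R) (dh : Xh -> Xh -> R) (i : X -> Xh).
Hypothesis i_isometry : forall a b, dh (i a) (i b) = d a b.

Lemma cauchy_seq_isometry (x : nat -> X) : cauchy_seq dh (fun n => i (x n)) <-> cauchy_seq d x.
Proof. unfold cauchy_seq. setoid_rewrite i_isometry. reflexivity. Qed.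

Lemma cofinally_bourbaki_quasi_cauchy_isometry (x : nat -> X) :
  cofinally_bourbaki_quasi_cauchy d x -> cofinally_bourbaki_quasi_cauchy dh (fun n => i (x n)).
Proof.
  intros Hx eps Heps. destruct (Hx eps Heps) as [N [HN Hch]]. exists N. split; [exact HN|].
  intros j k Hj Hk. destruct (Hch j k Hj Hk) as [n [s [Hs0 [Hsn Hs]]]].
  exists n, (fun m => i (s m)). rewrite Hs0, Hsn. repeat split.
  intros m Hm. rewrite i_isometry. exact (Hs m Hm).
Qed.

Hypothesis dh_metric : is_metric dh.

Lemma quasi_complete_completion_cauchy_subseq :
  cofinally_bourbaki_quasi_complete dh ->
  forall x, cofinally_bourbaki_quasi_cauchy d x -> has_cauchy_subseq d x.
Proof.
  intros Hqc x Hx.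
  destruct (Hqc _ (cofinally_bourbaki_quasi_cauchy_isometry x Hx)) as [p Hp].
  destruct (cluster_point_fast_subseq _ _ _ Hp) as [phi [Hphi Hclose]].
  exists phi. split; [exact Hphi|].
  apply (cauchy_seq_isometry (fun n => x (phi n))).
  exact (fast_convergence_cauchy _ _ dh_metric _ _ Hclose).
Qed.

Hypothesis d_metric : is_metric d.
Hypothesis i_dense : forall z eps, 0 < eps -> exists x, dh z (i x) < eps.

Lemma eps_chain_shadow (eps : R) (z1 z2 : Xh) (x1 x2 : X) :
  0 < eps -> eps_chain dh eps z1 z2 -> dh z1 (i x1) < eps -> dh z2 (i x2) < eps ->
  eps_chain d (3 * eps) x1 x2.
Proof.
  intros Heps [n [s [Hs0 [Hsn Hs]]]] Hx1 Hx2.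
  destruct (choice (fun m a => dh (s m) (i a) < eps)) as [a Ha].
  { intros m. exact (i_dense _ _ Heps). }
  apply eps_chain_cons with (a 0%nat); [|apply eps_chain_rcons with (a n); [exact d_metric| |]].
  - rewrite <- i_isometry.
    pose proof (metric_triangle _ _ dh_metric (i x1) z1 (i (a 0%nat))) as Htri.
    rewrite (metric_sym _ _ dh_metric (i x1) z1) in Htri.
    pose proof (Ha 0%nat) as Ha0. rewrite Hs0 in Ha0. lra.
  - exists n, a. repeat split. intros m Hm. rewrite <- i_isometry.
    pose proof (metric_triangle3 _ _ dh_metric (i (a m)) (s m) (s (S m)) (i (a (S m)))) as Htri.
    rewrite (metric_sym _ _ dh_metric (i (a m)) (s m)) in Htri.
    pose proof (Ha m). pose proof (Ha (S m)). pose proof (Hs m Hm). lra.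
  - rewrite <- i_isometry.
    pose proof (metric_triangle _ _ dh_metric (i (a n)) z2 (i x2)) as Htri.
    rewrite (metric_sym _ _ dh_metric (i (a n)) z2) in Htri.
    pose proof (Ha n) as Han. rewrite Hsn in Han. lra.
Qed.

Lemma cofinally_bourbaki_quasi_cauchy_shadow (z : nat -> Xh) (x : nat -> X) :
  (forall n, dh (z n) (i (x n)) < / (INR n + 1)) ->
  cofinally_bourbaki_quasi_cauchy dh z -> cofinally_bourbaki_quasi_cauchy d x.
Proof.
  intros Hx Hz eps Heps. destruct (Hz (eps / 3)) as [N [HN Hch]]; [lra|].
  destruct (inv_INR_succ_eventually_lt (eps / 3)) as [J HJ]; [lra|].
  exists (fun n => N n /\ (J <= n)%nat). split; [now apply infinite_nat_tail|].
  intros j k [HNj HJj] [HNk HJk]. replace eps with (3 * (eps / 3)) by field.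
  pose proof (Hx j). pose proof (Hx k). pose proof (HJ j HJj). pose proof (HJ k HJk).
  apply eps_chain_shadow with (z j) (z k); [lra | exact (Hch j k HNj HNk) | lra | lra].
Qed.

Lemma cauchy_subseq_quasi_complete_completion :
  complete_metric dh ->
  (forall x, cofinally_bourbaki_quasi_cauchy d x -> has_cauchy_subseq d x) ->
  cofinally_bourbaki_quasi_complete dh.
Proof.
  intros Hcomp H6 z Hz.
  destruct (choice (fun n a => dh (z n) (i a) < / (INR n + 1))) as [x Hx].
  { intros n. exact (i_dense _ _ (inv_INR_succ_pos n)). }
  destruct (H6 x (cofinally_bourbaki_quasi_cauchy_shadow z x Hx Hz)) as [phi [Hphi Hcs]].
  destruct (Hcomp _ (proj2 (cauchy_seq_isometry (fun n => x (phi n))) Hcs)) as [p Hp].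
  exists p. exact (cluster_point_near_subseq_limit _ _ dh_metric _ _ phi p Hx Hphi Hp).
Qed.

End Completion.

Theorem mainTheorem8 (X : Type) (d : X -> X -> R) (Hd : is_metric d)
  (Xh : Type) (dh : Xh -> Xh -> R) (i : X -> Xh) (Hc : is_completion d dh i) :
  let P1 := cofinally_bourbaki_quasi_complete dh in
  let P2 := forall (Y : Type) (rho : Y -> Y -> R), is_metric rho ->
      forall f : X -> Y, cauchy_continuous d rho f ->
      forall x : nat -> X, cofinally_bourbaki_quasi_cauchy d x ->
      has_cauchy_subseq rho (fun n => f (x n)) in
  let P3 := forall (Y : Type) (rho : Y -> Y -> R), is_metric rho ->
      forall f : X -> Y, cauchy_continuous d rho f ->
      forall x : nat -> X, cofinally_bourbaki_quasi_cauchy d x ->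
      cofinally_cauchy rho (fun n => f (x n)) in
  let P4 := forall (Y : Type) (rho : Y -> Y -> R), is_metric rho ->
      forall f : X -> Y, cauchy_continuous d rho f ->
      forall x : nat -> X, cofinally_bourbaki_quasi_cauchy d x ->
      cofinally_bourbaki_cauchy rho (fun n => f (x n)) in
  let P5 := forall f : X -> R, cauchy_continuous d Rdist f ->
      forall x : nat -> X, cofinally_bourbaki_quasi_cauchy d x ->
      cofinally_bourbaki_cauchy Rdist (fun n => f (x n)) in
  let P6 := forall x : nat -> X, cofinally_bourbaki_quasi_cauchy d x ->
      has_cauchy_subseq d x in
  (P1 <-> P2) /\ (P1 <-> P3) /\ (P1 <-> P4) /\ (P1 <-> P5) /\ (P1 <-> P6).
Proof.
  intros P1 P2 P3 P4 P5 P6.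
  destruct Hc as [Hdh [Hcomp [Hi Hdense]]].
  assert (H16 : P1 -> P6) by exact (quasi_complete_completion_cauchy_subseq X Xh d dh i Hi Hdh).
  assert (H61 : P6 -> P1)
    by exact (cauchy_subseq_quasi_complete_completion X Xh d dh i Hi Hdh Hd Hdense Hcomp).
  assert (H62 : P6 -> P2)
    by (intros H6 Y rho _ f Hf x Hx; exact (has_cauchy_subseq_comp d rho f x Hf (H6 x Hx))).
  assert (H23 : P2 -> P3)
    by (intros H2 Y rho Hrho f Hf x Hx;
        exact (has_cauchy_subseq_cofinally_cauchy _ _ (H2 Y rho Hrho f Hf x Hx))).
  assert (H34 : P3 -> P4)
    by (intros H3 Y rho Hrho f Hf x Hx;
        exact (cofinally_cauchy_bourbaki _ _ (H3 Y rho Hrho f Hf x Hx))).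
  assert (H45 : P4 -> P5) by (intros H4; exact (H4 R Rdist Rdist_metric)).
  assert (H56 : P5 -> P6).
  { intros H5 x Hx. apply NNPP. intros Hno.
    destruct (no_cauchy_subseq_unbounded_function d Hd x Hno) as [f [Hf Hfx]].
    exact (real_unbounded_not_cofinally_bourbaki_cauchy _ Hfx (H5 f Hf x Hx)). }
  tauto.
Qed.
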